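(* Let $(\mathcal A,\varphi,\mathcal F,\Phi)$ be a ncps of type B$'$ with associated infinitesimal ncps $(\mathcal B,\varphi,\varphi')$, let $q\in\mathcal F$ with $q^2=q$, $\Phi(q)=1$ and $(\mathcal A,\{q\})$ cyclic-antimonotone independent, and let $p:=1_{\mathcal B}-q$. Then for every $n\in\mathbb N$ and every $\sigma\in\mathrm{NC}(n)$, $$\sum_{\pi\in\mathrm{NC}(n),\ \pi\le\sigma}\kappa'_\pi[p,p,\dots,p]=-|\sigma|.$$
   Context: Ncps of type B$'$ $(\mathcal A,\varphi,\mathcal F,\Phi)$: $\mathcal A$ unital complex algebra, $\varphi(1_{\mathcal A})=1$, $\mathcal F$ an algebra which is an $\mathcal A$-bimodule compatible with its multiplication, $\Phi:\mathcal F\to\mathbb C$ linear. $\mathcal B=\mathcal A\oplus\mathcal F$ with product $(a_1,f_1)(a_2,f_2)=(a_1a_2,a_1f_2+f_1a_2+f_1f_2)$, unit $1_{\mathcal A}$; $\varphi(a+f):=\varphi(a)$, $\varphi'(a+f):=\Phi(f)$. Cyclic-antimonotone independence of $(\mathcal A,\{q\})$: $\Phi(a_0qa_1\cdots a_{n-1}qa_n)=\varphi(a_0a_n)\prod_{i=1}^{n-1}\varphi(a_i)\Phi(q^n)$ for $a_l\in\mathcal A$. $\mathrm{NC}(n)$: noncrossing partitions of $\{1,\dots,n\}$ with the refinement order, $|\sigma|$ the number of blocks. Infinitesimal free cumulants: let $\mathbb G=\mathbb C[\epsilon]/(\epsilon^2)$, $\tilde\varphi=\varphi+\epsilon\varphi':\mathcal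 B\to\mathbb G$, $\tilde\varphi_\pi[b_1,\dots,b_n]=\prod_{V\in\pi}\tilde\varphi(\prod_{i\in V}^{\to}b_i)$ (ordered products over blocks), $\tilde\kappa_\pi=\sum_{\sigma\le\pi}\tilde\varphi_\sigma\,\mu_n(\sigma,\pi)$ with $\mu_n$ the Möbius function of $\mathrm{NC}(n)$; writing $\tilde\kappa_\pi=\kappa_\pi+\epsilon\kappa'_\pi$, $\kappa'_\pi$ is the infinitesimal free cumulant. *)

From HB Require Import structures.
From mathcomp Require Import all_boot all_order all_algebra complex.
From mathcomp Require Import reals.
Set Implicit Arguments. Unset Strict Implicit. Unset Printing Implicit Defensive.
Import Order.TTheory GRing.Theory Num.Theory.
Local Open Scope ring_scope.

Section TypeBprime.
Variables (R : realType).
Local Notation C := (R[i]).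
Variables (A : algType C) (F : lmodType C)
          (mulF : F -> F -> F) (lact : A -> F -> F) (ract : F -> A -> F)
          (phi : A -> C) (Phi : F -> C).

Definition is_ncps_typeBprime : Prop :=
  (
      (forall a b, phi (a + b) = phi a + phi b) /\
      (forall (c : C) a, phi (c *: a) = c * phi a) /\
      phi 1 = 1) /\
  (
      (forall f g, Phi (f + g) = Phi f + Phi g) /\
      (forall (c : C) f, Phi (c *: f) = c * Phi f)) /\
  (
      (forall f g h, mulF (mulF f g) h = mulF f (mulF g h)) /\
      (forall f g h, mulF (f + g) h = mulF f h + mulF g h) /\
      (forall f g h, mulF f (g + h) = mulF f g + mulF f h) /\
      (forall (c : C) f g, mulF (c *: f) g = c *: mulF f g) /\
      (forall (c : C) f g, mulF f (c *: g) = c *: mulF f g)) /\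
  (
      (forall a b f, lact (a + b) f = lact a f + lact b f) /\
      (forall a f g, lact a (f + g) = lact a f + lact a g) /\
      (forall (c : C) a f, lact (c *: a) f = c *: lact a f) /\
      (forall (c : C) a f, lact a (c *: f) = c *: lact a f) /\
      (forall a b f, lact (a * b) f = lact a (lact b f)) /\
      (forall f, lact 1 f = f)) /\
  (
      (forall a b f, ract f (a + b) = ract f a + ract f b) /\
      (forall a f g, ract (f + g) a = ract f a + ract g a) /\
      (forall (c : C) a f, ract f (c *: a) = c *: ract f a) /\
      (forall (c : C) a f, ract (c *: f) a = c *: ract f a) /\
      (forall a b f, ract f (a * b) = ract (ract f a) b) /\
      (forall f, ract f 1 = f)) /\
  (
      (forall a b f, ract (lact a f) b = lact a (ract f b)) /\
      (forall a f g, lact a (mulF f g) = mulF (lact a f) g) /\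
      (forall a f g, ract (mulF f g) a = mulF f (ract g a)) /\
      (forall a f g, mulF (ract f a) g = mulF f (lact a g))).

(* q^k in F, k >= 1 : qpow q k = q^(k.+1) *)
Fixpoint qpow (q : F) (k : nat) : F :=
  if k is k'.+1 then mulF (qpow q k') q else q.

(* qword q a k = a_0 q a_1 q ... a_k q   (k.+1 copies of q) *)
Fixpoint qword (q : F) (a : nat -> A) (k : nat) : F :=
  if k is k'.+1 then mulF (ract (qword q a k') (a k)) q else lact (a 0%N) q.

(* Cyclic-antimonotone independence of (A, {q}):
   Phi(a_0 q a_1 ... a_{n-1} q a_n) = phi(a_0 a_n) prod_{i=1}^{n-1} phi(a_i) Phi(q^n)
   for all n >= 1 (here n = m.+1) and all a_0, ..., a_n in A. *)
Definition cyclic_antimonotone_indep (q : F) : Prop :=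
  forall (m : nat) (a : nat -> A),
    Phi (ract (qword q a m) (a m.+1)) =
      phi (a 0%N * a m.+1) * (\prod_(1 <= i < m.+1) phi (a i)) * Phi (qpow q m).

(* The algebra B = A (+) F *)
Definition mulB (x y : A * F) : A * F :=
  (x.1 * y.1, lact x.1 y.2 + ract x.2 y.1 + mulF x.2 y.2).
Definition oneB : A * F := (1, 0).
Definition phiB (x : A * F) : C := phi x.1.
Definition phiB' (x : A * F) : C := Phi x.2.

End TypeBprime.

Definition noncrossing n (P : {set {set 'I_n}}) : bool :=
  [forall B1 in P, forall B2 in P, (B1 != B2) ==>
     ~~ [exists a : 'I_n, exists b : 'I_n, exists c : 'I_n, exists d : 'I_n,
          [&& (a < b)%N, (b < c)%N, (c < d)%N, a \in B1, c \in B1, b \in B2 & d \in B2]]].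

Definition is_ncpart n (P : {set {set 'I_n}}) : bool :=
  partition P [set: 'I_n] && noncrossing P.

Definition NC n := {P : {set {set 'I_n}} | is_ncpart P}.

Definition ncle n (pi sigma : NC n) : bool :=
  [forall V in val pi, exists W in val sigma, V \subset W].

(* Moebius function of NC(n), via the standard recursion
   mu(s,s) = 1, mu(s,t) = - sum_{s <= r < t} mu(s,r) if s < t, 0 otherwise;
   the fuel #|NC n|.+1 exceeds the length of every chain. *)
Fixpoint mu_fuel n (k : nat) (s t : NC n) : int :=
  if k is k'.+1 then
    if s == t then 1
    else if ncle s t then
      - \sum_(r : NC n | [&& ncle s r, ncle r t & r != t]) mu_fuel k' s r
    else 0
  else 0.
Definition mobius_nc n (s t : NC n) : int := mu_fuel #|{: NC n}|.+1 s t.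

(* ---------- the ring G = C[eps]/(eps^2), as pairs (x, y) = x + eps y ---------- *)
Section Infinitesimal.
Variables (R : realType).
Local Notation C := (R[i]).
Definition gmul (x y : C * C) : C * C := (x.1 * y.1, x.1 * y.2 + x.2 * y.1).
Definition gadd (x y : C * C) : C * C := (x.1 + y.1, x.2 + y.2).
Definition gscale (z : int) (x : C * C) : C * C := (z%:~R * x.1, z%:~R * x.2).

Variables (A : algType C) (F : lmodType C)
          (mulF : F -> F -> F) (lact : A -> F -> F) (ract : F -> A -> F)
          (phi : A -> C) (Phi : F -> C).

(* tilde phi = phi + eps phi' : B -> G *)
Definition phitilde (x : A * F) : C * C :=
  (phiB phi x, phiB' Phi x).

Definition phitilde_part n (pi : NC n) (b : 'I_n -> A * F) : C * C :=
  \big[gmul/(1, 0)]_(V in val pi)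
     phitilde (\big[@mulB R A F mulF lact ract/@oneB R A F]_(i in V) b i).

Definition kappatilde n (pi : NC n) (b : 'I_n -> A * F) : C * C :=
  \big[gadd/(0, 0)]_(s : NC n | ncle s pi) gscale (mobius_nc s pi) (phitilde_part s b).

Definition kappa' n (pi : NC n) (b : 'I_n -> A * F) : C := (kappatilde pi b).2.
End Infinitesimal.

(* Since q is idempotent, so is p = 1 - q, hence every ordered block product of
   [p, ..., p] equals p and tilde phi_pi [p, ..., p] = (1 + eps phi'(p))^|pi|
   = 1 - eps |pi|.  Summing the cumulants over the interval [0, sigma] undoes the
   Moebius transform, leaving the eps-part of tilde phi_sigma, which is -|sigma|. *)
From mathcomp Require Import all_boot all_order all_algebra complex.
From mathcomp Require Import reals.
Set Implicit Arguments. Unset Strict Implicit. Unset Printing Implicit Defensive.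
Import Order.TTheory GRing.Theory Num.Theory.
Local Open Scope ring_scope.

Section NCOrder.
Variable n : nat.
Implicit Types s t u : NC n.

Lemma ncle_refl s : ncle s s.
Proof. by apply/forall_inP => V HV; apply/exists_inP; exists V. Qed.

Lemma ncle_trans s t u : ncle s t -> ncle t u -> ncle s u.
Proof.
move=> /forall_inP le_st /forall_inP le_tu; apply/forall_inP => V sV.
have /exists_inP [W tW sub_VW] := le_st V sV.
have /exists_inP [X uX sub_WX] := le_tu W tW.
by apply/exists_inP; exists X => //; apply: subset_trans sub_VW sub_WX.
Qed.

Lemma nc_block_neq0 s V : V \in val s -> V != set0.
Proof.
case: s => P /= /andP [/and3P [_ _ P0] _] PV.
by apply: contraNneq P0 => V0; rewrite -V0.
Qed.

Lemma nc_block_subset_eq s V W :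
  V \in val s -> W \in val s -> V \subset W -> V = W.
Proof.
move=> sV sW sub_VW; have /set0Pn [x Vx] := nc_block_neq0 sV.
case: s sV sW => P /= /andP [/and3P [_ /trivIsetP trivP _] _] PV PW.
apply/eqP; apply: contraT => neVW.
have /disjoint_setI0 VW0 := trivP V W PV PW neVW.
have : x \in V :&: W by rewrite inE Vx (subsetP sub_VW).
by rewrite VW0 inE.
Qed.

Lemma ncle_antisym_subset s t : ncle s t -> ncle t s -> val s \subset val t.
Proof.
move=> /forall_inP le_st /forall_inP le_ts; apply/subsetP => V sV.
have /exists_inP [W tW sub_VW] := le_st V sV.
have /exists_inP [X sX sub_WX] := le_ts W tW.
have VX : V = X := nc_block_subset_eq sV sX (subset_trans sub_VW sub_WX).
by have -> : V = W by apply/eqP; rewrite eqEsubset sub_VW VX.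
Qed.

Lemma ncle_anti s t : ncle s t -> ncle t s -> s = t.
Proof.
by move=> le_st le_ts; apply: val_inj; apply/eqP; rewrite eqEsubset !ncle_antisym_subset.
Qed.

End NCOrder.

Section Mobius.
Variable n : nat.
Implicit Types s t r : NC n.

Definition ncitv s t : {set NC n} := [set r | ncle s r && ncle r t].

Lemma mu_fuel_stable k s t :
  (#|ncitv s t| <= k)%N -> mu_fuel k.+1 s t = mu_fuel k s t.
Proof.
elim: k s t => [|k IHk] s t card_st.
  have nle_st : ~~ ncle s t.
    apply: contraTN card_st => le_st; rewrite -ltnNge card_gt0.
    by apply/set0Pn; exists s; rewrite inE ncle_refl.
  rewrite /= (negbTE nle_st).
  by case: eqVneq nle_st => // ->; rewrite ncle_refl.
rewrite [LHS]/= [RHS]/=.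
case: eqP => // _; case: ifP => // le_st; congr (- _).
apply: eq_bigr => r /and3P [le_sr le_rt ne_rt]; apply: IHk.
rewrite -ltnS; apply: leq_trans card_st; apply: proper_card; rewrite properE.
apply/andP; split.
  by apply/subsetP => x; rewrite !inE => /andP [-> /ncle_trans->].
apply/subsetPn; exists t; first by rewrite inE le_st ncle_refl.
rewrite inE negb_and; apply/orP; right.
by apply: contra ne_rt => le_tr; rewrite (ncle_anti le_rt le_tr).
Qed.

Lemma mobius_nc_id s : mobius_nc s s = 1.
Proof. by rewrite /mobius_nc /= eqxx. Qed.

Lemma mobius_nc_rec s t : s != t -> ncle s t ->
  mobius_nc s t = - \sum_(r | [&& ncle s r, ncle r t & r != t]) mobius_nc s r.
Proof.
move=> /negbTE ne_st le_st; rewrite [LHS]/mobius_nc [LHS]/= ne_st le_st.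
by congr (- _); apply: eq_bigr => r _; rewrite /mobius_nc mu_fuel_stable ?max_card.
Qed.

Lemma mobius_nc_sum s t :
  \sum_(r | ncle s r && ncle r t) mobius_nc s r = (s == t)%:R.
Proof.
have [le_st|nle_st] := boolP (ncle s t); last first.
  rewrite big_pred0 => [|r]; last by apply: contraNF nle_st => /andP [/ncle_trans]; apply.
  by case: eqP nle_st => // ->; rewrite ncle_refl.
rewrite (bigD1 t) /=; last by rewrite le_st ncle_refl.
have [<-|ne_st] := eqVneq s t.
  rewrite mobius_nc_id big_pred0 ?addr0 // => r.
  apply/negbTE; rewrite -andbA; apply/and3P => -[le_sr le_rs].
  by rewrite (ncle_anti le_sr le_rs) eqxx.
rewrite mobius_nc_rec // addrC; apply/eqP; rewrite subr_eq0; apply/eqP.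
by apply: eq_bigl => r; rewrite andbA.
Qed.

End Mobius.

Lemma mobius_nc_inversion (T : pzRingType) n (f : NC n -> T) (sigma : NC n) :
  \sum_(pi | ncle pi sigma) \sum_(s | ncle s pi) (mobius_nc s pi)%:~R * f s
    = f sigma.
Proof.
rewrite (exchange_big_dep (fun s => ncle s sigma)) /=; last first.
  by move=> pi s /[swap]; apply: ncle_trans.
under eq_bigr => s _.
  rewrite -mulr_suml (eq_bigl (fun pi => ncle s pi && ncle pi sigma)); last first.
    by move=> pi; rewrite andbC.
  rewrite -(big_morph intr (@intrD _) (mulr0z 1)) mobius_nc_sum.
  over.
rewrite (bigD1 sigma) ?ncle_refl //= eqxx mul1r big1 ?addr0 // => s /andP [_ /negbTE ->].
by rewrite mul0r.
Qed.

Section Cumulants.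
Variables (R : realType) (A : algType R[i]) (F : lmodType R[i])
  (mulF : F -> F -> F) (lact : A -> F -> F) (ract : F -> A -> F)
  (phi : A -> R[i]) (Phi : F -> R[i]).

Lemma kappa'E n (pi : NC n) (b : 'I_n -> A * F) :
  kappa' mulF lact ract phi Phi pi b
    = \sum_(s | ncle s pi)
        (mobius_nc s pi)%:~R * (phitilde_part mulF lact ract phi Phi s b).2.
Proof. by rewrite /kappa' /kappatilde (big_morph snd (id1 := 0) (op1 := +%R)). Qed.

Lemma sum_kappa' n (sigma : NC n) (b : 'I_n -> A * F) :
  \sum_(pi | ncle pi sigma) kappa' mulF lact ract phi Phi pi b
    = (phitilde_part mulF lact ract phi Phi sigma b).2.
Proof.
under eq_bigr do rewrite kappa'E.
exact: (mobius_nc_inversion (fun s => (phitilde_part mulF lact ract phi Phi s b).2)).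
Qed.

End Cumulants.

Lemma iter_gmul_infinitesimal (R : realType) (c : R[i]) k :
  iter k (gmul (1, c)) (1, 0) = (1, c *+ k).
Proof.
by elim: k => [|k IHk] //; rewrite iterS IHk /gmul /= !mulr1 mul1r mulrS addrC.
Qed.

Section TypeBprimeIdempotent.
Variables (R : realType) (A : algType R[i]) (F : lmodType R[i])
  (mulF : F -> F -> F) (lact : A -> F -> F) (ract : F -> A -> F)
  (phi : A -> R[i]) (Phi : F -> R[i]).
Hypothesis ncpsB : is_ncps_typeBprime mulF lact ract phi Phi.

Local Notation mulB := (mulB mulF lact ract).
Local Notation oneB := (@oneB R A F).

Let phi1 : phi 1 = 1.
Proof. by case: ncpsB => [[_ [_ ->]] _]. Qed.

Let PhiZ c f : Phi (c *: f) = c * Phi f.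
Proof. by case: ncpsB => [_ [[_ ->] _]]. Qed.

Let mulFDr f g h : mulF f (g + h) = mulF f g + mulF f h.
Proof. by case: ncpsB => [_ [_ [[_ [_ [-> _]]] _]]]. Qed.

Let mulFZl c f g : mulF (c *: f) g = c *: mulF f g.
Proof. by case: ncpsB => [_ [_ [[_ [_ [_ [-> _]]]] _]]]. Qed.

Let mulFZr c f g : mulF f (c *: g) = c *: mulF f g.
Proof. by case: ncpsB => [_ [_ [[_ [_ [_ [_ ->]]]] _]]]. Qed.

Let lactDr a f g : lact a (f + g) = lact a f + lact a g.
Proof. by case: ncpsB => [_ [_ [_ [[_ [-> _]] _]]]]. Qed.

Let lact1 f : lact 1 f = f.
Proof. by case: ncpsB => [_ [_ [_ [[_ [_ [_ [_ [_ ->]]]]] _]]]]. Qed.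

Let ract1 f : ract f 1 = f.
Proof. by case: ncpsB => [_ [_ [_ [_ [[_ [_ [_ [_ [_ ->]]]]] _]]]]]. Qed.

Lemma mulB1 x : mulB x oneB = x.
Proof.
have lact0 a : lact a 0 = 0 by apply: (addIr (lact a 0)); rewrite -lactDr !add0r.
have mulF0 f : mulF f 0 = 0 by apply: (addIr (mulF f 0)); rewrite -mulFDr !add0r.
by case: x => a f; rewrite /mulB /= mulr1 lact0 ract1 mulF0 add0r addr0.
Qed.

Lemma mulB_idem_compl q : mulF q q = q -> mulB (1, - q) (1, - q) = (1, - q).
Proof.
move=> idem_q; rewrite /mulB /= mulr1 lact1 ract1.
have -> : mulF (- q) (- q) = q.
  by rewrite -scaleN1r mulFZl mulFZr idem_q scalerA mulrN1 opprK scale1r.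
by rewrite addrNK.
Qed.

Lemma big_mulB_idem (I : finType) (V : {set I}) x :
  mulB x x = x -> V != set0 -> \big[mulB/oneB]_(i in V) x = x.
Proof.
move=> idem_x; rewrite -card_gt0 big_const; case: #|V| => // k _.
by elim: k => [|k IHk]; [exact: mulB1 | rewrite iterS IHk].
Qed.

Lemma phitilde_part_idem n (s : NC n) x : mulB x x = x ->
  phitilde_part mulF lact ract phi Phi s (fun _ => x)
    = iter #|val s| (gmul (phitilde phi Phi x)) (1, 0).
Proof.
move=> idem_x; rewrite /phitilde_part -big_const.
by apply: eq_bigr => V sV; rewrite big_mulB_idem // (nc_block_neq0 sV).
Qed.

Lemma phitilde_compl q : Phi q = 1 -> phitilde phi Phi (1, - q) = (1, -1).
Proof.
by move=> Phiq; rewrite /phitilde /phiB /phiB' /= phi1 -scaleN1r PhiZ Phiq mulr1.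
Qed.

End TypeBprimeIdempotent.

Theorem lemmaA1 (R : realType) (A : algType R[i]) (F : lmodType R[i])
    (mulF : F -> F -> F) (lact : A -> F -> F) (ract : F -> A -> F)
    (phi : A -> R[i]) (Phi : F -> R[i])
    (HB : is_ncps_typeBprime mulF lact ract phi Phi)
    (q : F) (hq2 : mulF q q = q) (hq1 : Phi q = 1)
    (hind : cyclic_antimonotone_indep mulF lact ract phi Phi q) :
  let p : A * F := (1, - q) (* p = 1_B - q *) in
  forall (n : nat), (0 < n)%N ->
  forall (sigma : NC n),
    \sum_(pi : NC n | ncle pi sigma)
        kappa' mulF lact ract phi Phi pi (fun _ => p)
      = - (#|val sigma|)%:R.
Proof.
move=> p n _ sigma.
rewrite sum_kappa' (phitilde_part_idem HB _ (mulB_idem_compl HB hq2)).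
rewrite (phitilde_compl HB hq1) iter_gmul_infinitesimal /=.
exact: mulNrn.
Qed.
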